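(* Let $p$ be a prime, $n\ge1$, $d\ge2$, ${\bf a}_1,\dots,{\bf a}_N\in\mathbb{N}^{n+1}$ with coordinate sums $d$, and $I\subseteq\{0,1,\dots,n\}$. If $u,v\in U^I_{\min}$, $\nu\in\mathbb{N}^N$, and $\sum_{j=1}^N\nu_j{\bf a}_j^+=pu-v$, then $\nu_j\le p-1$ for all $j$.
   Context: ${\bf a}_j^+=({\bf a}_j,1)\in\mathbb{N}^{n+2}$. The integer $\mu_I$ is defined by $\lceil|I|/d\rceil=\mu_I+1$. $U^I$ is the set of $u=(u_0,\dots,u_{n+1})\in\mathbb{N}^{n+2}$ with $\sum_{i=0}^nu_i=du_{n+1}$ and $u_i>0$ for all $i\in I$, and $U^I_{\min}=\{u\in U^I:u_{n+1}=\mu_I+1\}$. *)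

From mathcomp Require Import all_boot all_order all_algebra.
Set Implicit Arguments. Unset Strict Implicit. Unset Printing Implicit Defensive.
Import GRing.Theory Num.Theory.

(* Vectors in N^{n+1} are functions 'I_n.+1 -> nat (coordinates 0..n);
   vectors in N^{n+2} are functions 'I_n.+2 -> nat (coordinates 0..n+1). *)

(* a^+ = (a, 1) in N^{n+2} *)
Definition aplus (n : nat) (a : 'I_n.+1 -> nat) : 'I_n.+2 -> nat :=
  fun k => if (k < n.+1)%N then a (inord k) else 1%N.

Definition ceil_div (m d : nat) : nat := ((m + d.-1) %/ d)%N.

Definition muI_plus1 (n d : nat) (I : {set 'I_n.+1}) : nat := ceil_div #|I| d.

Definition in_UI (n d : nat) (I : {set 'I_n.+1}) (u : 'I_n.+2 -> nat) : Prop :=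
  (\sum_(i < n.+1) u (widen_ord (leqnSn n.+1) i) = d * u ord_max)%N /\
  (forall i : 'I_n.+1, i \in I -> (0 < u (widen_ord (leqnSn n.+1) i))%N).

Definition in_UImin (n d : nat) (I : {set 'I_n.+1}) (u : 'I_n.+2 -> nat) : Prop :=
  in_UI d I u /\ u ord_max = muI_plus1 d I.

(* If nu_j >= p, then p a_j^+ + v <= p u coordinatewise.  Dividing by p on
   the first n+1 coordinates gives a_{j,i} <= u_i, strictly for i in I since
   v_i > 0 there.  Summing over i yields d + |I| <= d u_{n+1} = d ceil(|I|/d),
   contradicting d ceil(|I|/d) < |I| + d. *)

From mathcomp Require Import all_boot all_order all_algebra.
From mathcomp Require Import zify.
Import GRing.Theory Num.Theory.

Set Implicit Arguments.
Unset Strict Implicit.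
Unset Printing Implicit Defensive.

Lemma ceil_div_ub (m d : nat) : 0 < d -> d * ceil_div m d < m + d.
Proof.
move=> d_gt0; have := leq_divM (m + d.-1) d.
by rewrite /ceil_div mulnC; lia.
Qed.

Lemma Posz_eq_subr (s x y : nat) : (Posz s = Posz x - Posz y)%R -> s + y = x.
Proof. by move/eqP; rewrite eq_sym subr_eq -PoszD => /eqP[]. Qed.

Lemma leq_term_sum (N : nat) (F : 'I_N -> nat) (j : 'I_N) :
  F j <= \sum_(i < N) F i.
Proof. by rewrite (bigD1 j) //= leq_addr. Qed.

Lemma leq_of_pmul_addr (p x y z : nat) :
  0 < p -> p * x + y <= p * z -> x <= z.
Proof. by move=> p_gt0 /(leq_trans (leq_addr _ _)); rewrite leq_pmul2l. Qed.

Lemma ltn_of_pmul_addr (p x y z : nat) :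
  0 < p -> 0 < y -> p * x + y <= p * z -> x < z.
Proof.
move=> p_gt0 y_gt0 /(leq_trans _) lt_pxz.
by rewrite -(ltn_pmul2l p_gt0) lt_pxz // -[X in X < _]addn0 ltn_add2l.
Qed.

Lemma sum_addcard_leq (n : nat) (I : {set 'I_n}) (w u : 'I_n -> nat) :
  (forall i, w i <= u i) -> (forall i, i \in I -> w i < u i) ->
  \sum_(i < n) w i + #|I| <= \sum_(i < n) u i.
Proof.
move=> le_wu lt_wu; rewrite -sum1_card [X in _ + X]big_mkcond -big_split /=.
apply: leq_sum => i _; case: ifP => iI; last by rewrite addn0.
by rewrite addn1; exact: lt_wu.
Qed.

Lemma aplus_widen (n : nat) (a : 'I_n.+1 -> nat) (i : 'I_n.+1) :
  aplus a (widen_ord (leqnSn n.+1) i) = a i.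
Proof.
by rewrite /aplus /= ltn_ord; congr a; apply: val_inj; rewrite /= inordK.
Qed.

Theorem lemma2p1 (p n d N : nat) (a : 'I_N -> 'I_n.+1 -> nat)
  (I : {set 'I_n.+1}) (u v : 'I_n.+2 -> nat) (nu : 'I_N -> nat) :
  prime p -> (1 <= n)%N -> (2 <= d)%N ->
  (forall j : 'I_N, (\sum_(i < n.+1) a j i)%N = d) ->
  in_UImin d I u -> in_UImin d I v ->
  (forall k : 'I_n.+2,
     (Posz (\sum_(j < N) nu j * aplus (a j) k)%N = Posz (p * u k)%N - Posz (v k))%R) ->
  forall j : 'I_N, (nu j <= p - 1)%N.
Proof.
move=> /prime_gt0 p_gt0 _ /ltnW d_gt0 a_sum [[u_sum _] u_max] [[_ v_pos] _] nu_eq j.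
case: (leqP p (nu j)) => [p_le_nu|]; last by lia.
have dom k : p * aplus (a j) k + v k <= p * u k.
  move/Posz_eq_subr: (nu_eq k) <-; rewrite leq_add2r.
  exact: leq_trans (leq_mul p_le_nu (leqnn _))
                   (leq_term_sum (fun i => nu i * aplus (a i) k) j).
pose wid := widen_ord (leqnSn n.+1).
have dom_wid i : p * a j i + v (wid i) <= p * u (wid i).
  by rewrite -(aplus_widen (a j)); exact: dom.
have cover : d + #|I| <= d * muI_plus1 d I.
  rewrite -u_max -u_sum -{1}(a_sum j); apply: sum_addcard_leq => i.
    exact: leq_of_pmul_addr p_gt0 (dom_wid i).
  by move=> iI; exact: ltn_of_pmul_addr p_gt0 (v_pos i iI) (dom_wid i).
by have := ceil_div_ub #|I| d_gt0; rewrite addnC ltnNge cover.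
Qed.
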